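(* Let $\mathcal A=\{a_1,\dots,a_n\}\subset\mathbb Z^d$ with $n\ge d+2$ and $d$-dimensional convex hull, and let $\Delta=\{a_{i_1},\dots,a_{i_{d+1}}\}$ be a $d$-simplex of $\mathcal A$ with index set $I=\{i_1<\dots<i_{d+1}\}$. Then the cone $\mathcal C_\Delta$ of all height vectors $h\in\mathbb R^n$ inducing a regular subdivision of $\mathcal A$ that contains $\Delta$ (as a cell) is \[ \mathcal C_\Delta=\{h\in\mathbb R^n:\ \langle d_I\cdot m^I_i,h\rangle=d_I\cdot d_{I\cup\{i\}}(h)>0\ \text{ for all } i\notin I\}, \] and the $n-(d+1)$ vectors $d_I\cdot m^I_i$, $i\notin I$, form a basis of the kernel of the matrix $A$.
   Context: Let $A\in\mathbb Z^{(d+1)\times n}$ be the matrix whose $j$-th column is $(1,a_j)^t$, and for $h\in\mathbb R^n$ let $A_h\in\mathbb R^{(d+2)\times n}$ be $A$ with the extra last row $(h_1,\dots,h_n)$. A $d$-simplex of $\mathcal A$ is a subset of $d+1$ affinely independent points of $\mathcal A$. $d_I$ is the determinant of the $(d+1)\times(d+1)$ submatrix of $A$ with columns indexed by $I$ (nonzero). For $i\notin I$, $d_{I\cup\{i\}}(h)$ is the determinant of the $(d+2)\times(d+2)$ submatrix of $A_h$ with columns indexed by $I\cup\{i\}$, multiplied by the sign of the permutation sending the increasingly ordered $I\cup\{i\}$ to $(i_1,\dots,i_{d+1},i)$; it is a linear function of $h$, and $m^I_i\in\mathbb R^n$ denotes the vector with $d_{I\cup\{i\}}(h)=\langle m^I_i,h\rangle$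 for all $h$. Regular subdivisions: for $h\in\mathbb R^n$, lift $a_j$ to $(a_j,h_j)\in\mathbb R^{d+1}$; the lower faces of the convex hull of the lifted points are the faces having an inner normal with positive last coordinate. For each lower face $F$, the set $\{a_j:(a_j,h_j)\in F\}$ is a cell; the collection of cells is the regular subdivision $\Gamma_h$ induced by $h$. ''$\Gamma_h$ contains $\Delta$'' means $\Delta$ is a cell of $\Gamma_h$. *)

From HB Require Import structures.
From mathcomp Require Import all_boot all_order all_algebra.
Set Implicit Arguments. Unset Strict Implicit. Unset Printing Implicit Defensive.
Import Order.TTheory GRing.Theory Num.Theory.
Local Open Scope ring_scope.

Definition Amat (d n : nat) (a : 'I_n -> 'rV[int]_d) : 'M[int]_(d.+1, n) :=
  \matrix_(r < d.+1, j < n)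
     match unlift ord0 r with Some r' => a j 0 r' | None => 1 end.

Definition AmatR (R : realFieldType) (d n : nat) (a : 'I_n -> 'rV[int]_d)
  : 'M[R]_(d.+1, n) := map_mx (fun z : int => z%:~R) (Amat a).

Definition ptR (R : realFieldType) (d n : nat) (a : 'I_n -> 'rV[int]_d) (j : 'I_n)
  : 'rV[R]_d := map_mx (fun z : int => z%:~R) (a j).

Definition dotv (R : realFieldType) (k : nat) (u v : 'rV[R]_k) : R :=
  \sum_(j < k) u 0 j * v 0 j.

Definition Ah (R : realFieldType) (d n : nat) (a : 'I_n -> 'rV[int]_d)
  (h : 'rV[R]_n) : 'M[R]_(d.+2, n) :=
  \matrix_(r < d.+2, j < n)
     match unlift ord_max r with Some r' => AmatR R a r' j | None => h 0 j end.

(* I = {i_1 < ... < i_{d+1}} is given by the increasing map idx : 'I_(d.+1) -> 'I_n. *)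
Definition Iset (d n : nat) (idx : 'I_(d.+1) -> 'I_n) : {set 'I_n} :=
  [set idx k | k : 'I_(d.+1)].

Definition dI (R : realFieldType) (d n : nat) (a : 'I_n -> 'rV[int]_d)
  (idx : 'I_(d.+1) -> 'I_n) : R :=
  \det (colsub idx (AmatR R a)).

Definition ext_idx (d n : nat) (idx : 'I_(d.+1) -> 'I_n) (i : 'I_n)
  : 'I_(d.+2) -> 'I_n :=
  fun k => match unlift ord_max k with Some k' => idx k' | None => i end.

(* d_{I u {i}}(h): determinant of the (d+2)x(d+2) submatrix of A_h with columns
   I u {i} in increasing order, times the sign of the permutation sending that
   order to (i_1,...,i_{d+1},i); this is exactly the determinant of the
   submatrix with columns taken in the order (i_1,...,i_{d+1},i). *)
Definition dIi (R : realFieldType) (d n : nat) (a : 'I_n -> 'rV[int]_d)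
  (idx : 'I_(d.+1) -> 'I_n) (i : 'I_n) (h : 'rV[R]_n) : R :=
  \det (colsub (ext_idx idx i) (Ah a h)).

(* m^I_i : the coefficient vector of the linear form h |-> d_{I u {i}}(h),
   i.e. its j-th coordinate is the value on the j-th standard basis vector. *)
Definition mvec (R : realFieldType) (d n : nat) (a : 'I_n -> 'rV[int]_d)
  (idx : 'I_(d.+1) -> 'I_n) (i : 'I_n) : 'rV[R]_n :=
  \row_(j < n) dIi a idx i (delta_mx 0 j).

(* S (a set of indices) is the set of lifted points (a_j, h_j) lying on a lower
   face of the convex hull of the lifted points: the face cut out by an inner
   normal (c, t) with t > 0, i.e. the lifted points minimizing
   <c, a_j> + t h_j. *)
Definition lower_face_indices (R : realFieldType) (d n : nat)
  (a : 'I_n -> 'rV[int]_d) (h : 'rV[R]_n) (S : {set 'I_n}) : Prop :=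
  exists (c : 'rV[R]_d) (t : R), 0 < t /\
    forall j : 'I_n,
      j \in S <-> (forall k : 'I_n,
         dotv c (ptR R a j) + t * h 0 j <= dotv c (ptR R a k) + t * h 0 k).

Definition regular_contains (R : realFieldType) (d n : nat)
  (a : 'I_n -> 'rV[int]_d) (h : 'rV[R]_n) (idx : 'I_(d.+1) -> 'I_n) : Prop :=
  exists S : {set 'I_n}, lower_face_indices a h S /\
    forall x : 'rV[int]_d,
      (exists2 j, j \in S & a j = x) <-> (exists k : 'I_(d.+1), a (idx k) = x).

Definition kerfam (R : realFieldType) (d n : nat) (a : 'I_n -> 'rV[int]_d)
  (idx : 'I_(d.+1) -> 'I_n) : 'M[R]_(#|~: Iset idx|, n) :=
  \matrix_(k < #|~: Iset idx|) (dI R a idx *: mvec R a idx (enum_val k)).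

From HB Require Import structures.
From mathcomp Require Import all_boot all_order all_algebra ring.
Import Order.TTheory GRing.Theory Num.Theory.
Local Open Scope ring_scope.
Set Implicit Arguments. Unset Strict Implicit.

(* Laplace expansion along the last row makes [h |-> d_{I u {i}}(h)] a linear
   form that kills every row of [A], hence every affine function of the points,
   and that equals [h_i d_I] on heights vanishing on [I]. As [d_I <> 0], any [h]
   can be corrected by an affine function to vanish on [I], and [Delta] is a
   lower face exactly when the corrected heights are positive off [I]; so
   [d_I d_{I u {i}}(h) = d_I^2 (corrected h)_i]. Evaluating the forms at the
   unit vectors [e_j], [j] not in [I], shows that the [n - d - 1] vectors
   [d_I m^I_i] are independent, and they lie in [ker A], of dimension
   [n - rank A = n - d - 1]. *)

Lemma dotvZ (R : realFieldType) (k : nat) (x : R) (u v : 'rV[R]_k) :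
  dotv (x *: u) v = x * dotv u v.
Proof.
by rewrite /dotv big_distrr; apply: eq_bigr => j _; rewrite !mxE -mulrA.
Qed.

Section RegularCell.

Variables (R : realFieldType) (d n : nat) (a : 'I_n -> 'rV[int]_d).
Variable idx : 'I_(d.+1) -> 'I_n.

Local Notation A := (AmatR R a).

Definition affine_row (c0 : R) (c : 'rV[R]_d) : 'rV[R]_n :=
  \row_j (c0 + dotv c (ptR R a j)).

Definition last_cofactor (i : 'I_n) (k : 'I_d.+2) : R :=
  cofactor (colsub (ext_idx idx i) (Ah a 0)) ord_max k.

Lemma dIiE i (h : 'rV[R]_n) :
  dIi a idx i h = \sum_k h 0 (ext_idx idx i k) * last_cofactor i k.
Proof.
rewrite /dIi (expand_det_row _ ord_max); apply: eq_bigr => k _; congr (_ * _).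
  by rewrite !mxE unlift_none.
rewrite /last_cofactor /cofactor; congr (_ * \det _); apply/matrixP => r c.
by rewrite !mxE liftK.
Qed.

Lemma last_cofactor_max i : last_cofactor i ord_max = dI R a idx.
Proof.
rewrite /last_cofactor /cofactor /dI -signr_odd addnn odd_double expr0 mul1r.
by congr (\det _); apply/matrixP => r c; rewrite !mxE liftK /ext_idx liftK !mxE.
Qed.

Lemma dotv_mvec i (h : 'rV[R]_n) : dotv (mvec R a idx i) h = dIi a idx i h.
Proof.
rewrite /dotv dIiE.
under eq_bigr => j _ do rewrite mxE dIiE big_distrl /=.
rewrite exchange_big /=; apply: eq_bigr => k _.
rewrite (bigD1 (ext_idx idx i k)) //= big1 ?addr0.
  by rewrite mxE !eqxx mul1r mulrC.
by move=> j /negPf hj; rewrite mxE eq_sym hj andbF !mul0r.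
Qed.

Lemma dIiD i (u v : 'rV[R]_n) :
  dIi a idx i (u + v) = dIi a idx i u + dIi a idx i v.
Proof.
rewrite -!dotv_mvec /dotv -big_split.
by apply: eq_bigr => j _; rewrite !mxE mulrDr.
Qed.

Lemma dIi_sum i m (c : 'I_m -> R) (F : 'I_m -> 'rV[R]_n) :
  dIi a idx i (\sum_r c r *: F r) = \sum_r c r * dIi a idx i (F r).
Proof.
rewrite -dotv_mvec /dotv.
under eq_bigr => j _ do rewrite summxE big_distrr /=.
rewrite exchange_big /=; apply: eq_bigr => r _.
rewrite -dotv_mvec /dotv big_distrr; apply: eq_bigr => j _.
by rewrite !mxE mulrCA.
Qed.

(* A row of [A] placed as the last row of [A_h] repeats one of its rows. *)
Lemma dIi_row_Amat i r : dIi a idx i (row r A) = 0.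
Proof.
rewrite /dIi (@determinant_alternate _ _ _ ord_max (lift ord_max r)) //.
  exact: neq_lift.
by move=> c; rewrite !mxE liftK unlift_none !mxE.
Qed.

Lemma dIi_mul_Amat i g : dIi a idx i (g *m A) = 0.
Proof.
by rewrite mulmx_sum_row dIi_sum big1 // => r _; rewrite dIi_row_Amat mulr0.
Qed.

Lemma mul_AmatE (g : 'rV[R]_d.+1) j :
  (g *m A) 0 j = g 0 ord0 + dotv (\row_r g 0 (lift ord0 r)) (ptR R a j).
Proof.
rewrite !mxE big_ord_recl /= !mxE unlift_none mulr1; congr (_ + _).
by apply: eq_bigr => r _; rewrite !mxE liftK.
Qed.

Lemma affine_rowE c0 c :
  affine_row c0 c = (\row_r oapp (fun r' => c 0 r') c0 (unlift ord0 r)) *m A.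
Proof.
apply/rowP => j; rewrite mul_AmatE !mxE unlift_none; congr (_ + dotv _ _).
by apply/rowP => r; rewrite !mxE liftK.
Qed.

Lemma dIi_affine_row i c0 c : dIi a idx i (affine_row c0 c) = 0.
Proof. by rewrite affine_rowE dIi_mul_Amat. Qed.

Lemma dIi_vanishing_on_Iset i (h : 'rV[R]_n) :
  (forall k, h 0 (idx k) = 0) -> dIi a idx i h = h 0 i * dI R a idx.
Proof.
move=> h0; rewrite dIiE (bigD1 ord_max) //= big1 ?addr0.
  by rewrite last_cofactor_max /ext_idx unlift_none.
move=> k; rewrite /ext_idx; case: unliftP => [k' _|->]; last by rewrite eqxx.
by rewrite h0 mul0r.
Qed.

Lemma dIi_shift i c0 c (h : 'rV[R]_n) :
  (forall k, (h + affine_row c0 c) 0 (idx k) = 0) ->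
  dIi a idx i h = (h + affine_row c0 c) 0 i * dI R a idx.
Proof.
by move=> h0; rewrite -dIi_vanishing_on_Iset // dIiD dIi_affine_row addr0.
Qed.

Lemma kerfam_sub_kermx : (kerfam R a idx <= kermx A^T)%MS.
Proof.
apply/sub_kermxP; apply/matrixP => k r; rewrite !mxE.
have := dIi_row_Amat (enum_val k) r; rewrite -dotv_mvec => e.
rewrite -[RHS](mulr0 (dI R a idx)) -[in RHS]e /dotv big_distrr.
by apply: eq_bigr => j _; rewrite !mxE -mulrA.
Qed.

Lemma mem_Iset j : reflect (exists k, j = idx k) (j \in Iset idx).
Proof. by apply: (iffP imsetP) => [[k _ ->]|[k ->]]; exists k. Qed.

Lemma card_Iset_compl : injective idx -> #|~: Iset idx| = (n - d.+1)%N.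
Proof.
by move=> inj_idx; rewrite cardsCs card_ord setCK card_imset // card_ord.
Qed.

Lemma regular_containsE (h : 'rV[R]_n) :
  injective a -> regular_contains a h idx <-> lower_face_indices a h (Iset idx).
Proof.
move=> ha; split=> [[S [faceS ptsS]]|faceI]; last first.
  exists (Iset idx); split => // x.
  split => [[j /mem_Iset [k ->] <-]|[k <-]]; first by exists k.
  by exists (idx k) => //; apply/mem_Iset; exists k.
suff -> : Iset idx = S by [].
apply/setP => j; apply/idP/idP => [/mem_Iset [k ->]|jS].
  have [j' j'S ej'] : exists2 j', j' \in S & a j' = a (idx k).
    by apply/ptsS; exists k.
  by rewrite -(ha _ _ ej').
have [k ek] : exists k, a (idx k) = a j by apply/ptsS; exists j.
by apply/mem_Iset; exists k; rewrite (ha _ _ ek).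
Qed.

(* Rescaling the inner normal to [t = 1] turns the height function on the lifted
   points into [h] plus an affine function, normalized to vanish on the face. *)
Lemma lower_face_IsetP (h : 'rV[R]_n) :
  lower_face_indices a h (Iset idx) <->
  exists c0 c, (forall k, (h + affine_row c0 c) 0 (idx k) = 0) /\
    forall i, i \notin Iset idx -> 0 < (h + affine_row c0 c) 0 i.
Proof.
split=> [[c [t [t_gt0 faceI]]]|[c0 [c [del0 del_gt0]]]].
  pose v j := dotv c (ptR R a j) + t * h 0 j.
  have vmin j k : j \in Iset idx -> v j <= v k by move/faceI; apply.
  have I_Iset k : idx k \in Iset idx by apply/mem_Iset; exists k.
  have vI k : v (idx k) = v (idx ord0) by apply/le_anti; rewrite !vmin.
  exists (- v (idx ord0) / t), (t^-1 *: c).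
  have delE j : (h + affine_row (- v (idx ord0) / t) (t^-1 *: c)) 0 j
      = (v j - v (idx ord0)) / t.
    by rewrite !mxE dotvZ /v; field; rewrite gt_eqF.
  split=> [k|i iI]; first by rewrite delE vI subrr mul0r.
  rewrite delE divr_gt0 // subr_gt0.
  have /forallPn [k] : ~~ [forall k, v i <= v k].
    by apply: contra iI => /forallP /faceI.
  by rewrite -ltNge; apply: le_lt_trans (vmin _ _ (I_Iset ord0)).
have vE j : dotv c (ptR R a j) + 1 * h 0 j = (h + affine_row c0 c) 0 j - c0.
  by rewrite !mxE; ring.
exists c, 1; split=> [|j]; first exact: ltr01.
split=> [/mem_Iset [k ->] k'|jmin].
  rewrite !vE lerD2r del0.
  have [/mem_Iset [l ->]|k'I] := boolP (k' \in Iset idx); first by rewrite del0.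
  exact/ltW/del_gt0.
apply: contraT => jI; have := jmin (idx ord0).
by rewrite !vE lerD2r del0 leNgt del_gt0.
Qed.

Section Simplex.

Hypothesis haff : forall lam : 'I_(d.+1) -> R,
  \sum_(k < d.+1) lam k = 0 ->
  \sum_(k < d.+1) lam k *: ptR R a (idx k) = 0 ->
  forall k, lam k = 0.

Local Notation B := (colsub idx A).

Lemma dI_neq0 : dI R a idx != 0.
Proof.
apply/negP; rewrite /dI -det_tr => /det0P [v v_neq0 vB].
have vB_row r : \sum_k v 0 k * B r k = 0.
  have := congr1 (fun M : 'rV_d.+1 => M 0 r) vB.
  by rewrite !mxE; under eq_bigr do rewrite mxE.
suff v0 : forall k, v 0 k = 0.
  by case/eqP: v_neq0; apply/rowP => k; rewrite v0 mxE.
apply: haff.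
  rewrite -[RHS](vB_row ord0); apply: eq_bigr => k _.
  by rewrite !mxE unlift_none mulr1.
apply/rowP => r; rewrite summxE mxE -[RHS](vB_row (lift ord0 r)).
by apply: eq_bigr => k _; rewrite !mxE liftK.
Qed.

Lemma unitmx_colsub_Amat : B \in unitmx.
Proof. by rewrite unitmxE unitfE dI_neq0. Qed.

Lemma affine_interpolation (h : 'rV[R]_n) :
  exists c0 c, forall k, (h + affine_row c0 c) 0 (idx k) = 0.
Proof.
have [g gB] : exists g, colsub idx (g *m A) = - \row_k h 0 (idx k).
  exists (- ((\row_k h 0 (idx k)) *m invmx B)).
  by rewrite -mulmx_colsub mulNmx mulmxKV // unitmx_colsub_Amat.
exists (g 0 ord0), (\row_r g 0 (lift ord0 r)) => k.
rewrite mxE [affine_row _ _ 0 _]mxE -mul_AmatE.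
move/(congr1 (fun M : 'rV[R]_d.+1 => M 0 k)): gB.
by rewrite !mxE => ->; rewrite subrr.
Qed.

Lemma lower_face_Iset_dIi (h : 'rV[R]_n) :
  lower_face_indices a h (Iset idx) <->
  forall i, i \notin Iset idx -> 0 < dI R a idx * dIi a idx i h.
Proof.
have dI2_gt0 : 0 < dI R a idx * dI R a idx.
  by rewrite -expr2 exprn_even_gt0 // dI_neq0 orbT.
rewrite lower_face_IsetP; split=> [[c0 [c [del0 del_gt0]]] i iI|dIi_gt0].
  by rewrite (dIi_shift _ del0) mulrCA pmulr_lgt0 // del_gt0.
have [c0 [c del0]] := affine_interpolation h.
exists c0, c; split=> // i iI.
by have := dIi_gt0 i iI; rewrite (dIi_shift _ del0) mulrCA pmulr_lgt0.
Qed.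

Lemma rank_Amat : \rank A = d.+1.
Proof.
apply/eqP; rewrite eqn_leq rank_leq_row -{1}(mxrank_unit unitmx_colsub_Amat).
by rewrite -[A]mulmx1 -mulmx_colsub mulmx1 mxrankM_maxl.
Qed.

(* Against the coordinate projection onto the indices outside [I], the family
   [d_I m^I_i] becomes [d_I^2] times the identity. *)
Lemma rank_kerfam : \rank (kerfam R a idx) = #|~: Iset idx|.
Proof.
apply/eqP; rewrite eqn_leq rank_leq_row /=.
pose P : 'M[R]_(n, #|~: Iset idx|) := \matrix_(j, l) (j == enum_val l)%:R.
have KP : kerfam R a idx *m P = (dI R a idx * dI R a idx) *: 1%:M.
  apply/matrixP => k l; rewrite !mxE (bigD1 (enum_val l)) //= big1 ?addr0.
    rewrite !mxE eqxx mulr1 dIi_vanishing_on_Iset.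
      by rewrite !mxE !eqxx /= (inj_eq enum_val_inj) mulrA mulrAC.
    move=> k'; rewrite mxE /=.
    have : enum_val l \in ~: Iset idx := enum_valP l.
    by rewrite inE; case: (idx k' =P enum_val l) => [<-|//]; rewrite imset_f.
  by move=> j /negPf hj; rewrite !mxE hj mulr0.
rewrite -{1}(mxrank1 R #|~: Iset idx|).
by rewrite -(mxrank_scale_nz _ (mulf_neq0 dI_neq0 dI_neq0)) -KP mxrankM_maxl.
Qed.

End Simplex.

End RegularCell.

Unset Implicit Arguments. Set Strict Implicit.
Theorem lemma2p1 (R : realFieldType) (d n : nat) (a : 'I_n -> 'rV[int]_d)
  (idx : 'I_(d.+1) -> 'I_n)
  (hn : (d.+2 <= n)%N)
  (ha : injective a)
  (hfull : forall (c : 'rV[R]_d) (c0 : R),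
      (forall j : 'I_n, dotv c (ptR R a j) + c0 = 0) -> c = 0 /\ c0 = 0)
  (hinc : forall k l : 'I_(d.+1), (val k < val l)%N -> (val (idx k) < val (idx l))%N)
  (haff : forall lam : 'I_(d.+1) -> R,
      \sum_(k < d.+1) lam k = 0 ->
      \sum_(k < d.+1) lam k *: ptR R a (idx k) = 0 ->
      forall k, lam k = 0) :
  (forall h : 'rV[R]_n,
      regular_contains a h idx <->
      (forall i : 'I_n, i \notin Iset idx ->
          0 < dotv (dI R a idx *: mvec R a idx i) h))
  /\ (forall (i : 'I_n) (h : 'rV[R]_n), i \notin Iset idx ->
        dotv (dI R a idx *: mvec R a idx i) h = dI R a idx * dIi a idx i h)
  /\ row_free (kerfam R a idx)
  /\ (kerfam R a idx == kermx (AmatR R a)^T)%MS.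
Proof.
have inj_idx : injective idx := inc_inj (@le_mono _ _ _ _ idx hinc).
have dotE i h :
    dotv (dI R a idx *: mvec R a idx i) h = dI R a idx * dIi a idx i h.
  by rewrite dotvZ dotv_mvec.
split=> [h|].
  apply: iff_trans (regular_containsE _ _ ha) _.
  apply: iff_trans (lower_face_Iset_dIi haff _) _.
  by split=> pos i /pos; rewrite dotE.
split=> [i h _|]; first exact: dotE.
split; first by rewrite /row_free (rank_kerfam haff).
rewrite -(mxrank_leqif_eq (kerfam_sub_kermx R a idx)) (rank_kerfam haff).
by rewrite mxrank_ker mxrank_tr (rank_Amat haff) card_Iset_compl.
Qed.
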